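(* Assume the setting described in the context. Then for all $t\in\{1,\ldots,T\}$, $x_0,x_t\in\mathbb{R}^d$ it holds that $$p^\emptyset_{t\mid 0}(x_t\mid x_0)=\mathcal N\big(x_t,\sqrt{\bar\alpha_t}\,x_0,(1-\bar\alpha_t)\mathrm I_d\big).$$
   Context: Let $d,\mathfrak d,T\in\mathbb{N}$ and let $(\Omega,\mathcal F,\mathbb P)$ be a probability space. For every $\theta\in\mathbb{R}^{\mathfrak d}\cup\{\emptyset\}$ let $X^\theta=(X^\theta_t)_{t\in\{0,1,\ldots,T\}}$ be an $\mathbb{R}^d$-valued stochastic process on $\Omega$, and assume that $(X^\theta)_{\theta\in\mathbb{R}^{\mathfrak d}}$ and $X^\emptyset$ are independent. For every $\theta\in\mathbb{R}^{\mathfrak d}\cup\{\emptyset\}$ let $p^\theta\colon(\mathbb{R}^d)^{T+1}\to(0,\infty)$ be measurable with $\mathbb P(X^\theta_0\in B_0,\ldots,X^\theta_T\in B_T)=\int_{B_0}\cdots\int_{B_T}p^\theta(x_0,\ldots,x_T)\,dx_0\cdots dx_T$ for all Borel sets $B_0,\ldots,B_T\subseteq\mathbb{R}^d$. For distinct $a_1,\ldots,a_S\in\{0,\ldots,T\}$ ($S\le T$) let $p^\theta_{a_1,\ldots,a_S}$ be the marginal density obtained by integrating $p^\theta(x_0,\ldots,x_T)$ over the remaining variables (and $p^\theta_{0,\ldots,T}=p^\theta$); for distinct $a_1,\ldots,a_S,b_1,\ldots,b_K\in\{0,\ldots,T\}$ with $S,K\in\{1,\ldots,T\}$ define $p^\theta_{a_1,\ldots,a_S\mid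 b_1,\ldots,b_K}(x_{a_1},\ldots,x_{a_S}\mid x_{b_1},\ldots,x_{b_K})=\frac{p^\theta_{a_1,\ldots,a_S,b_1,\ldots,b_K}(x_{a_1},\ldots,x_{b_K})}{p^\theta_{b_1,\ldots,b_K}(x_{b_1},\ldots,x_{b_K})}$. Let $\Pi\colon\mathbb{R}^d\to(0,\infty)$ with $p^\theta_T=\Pi$ for all $\theta\in\mathbb{R}^{\mathfrak d}$ (no Markov assumption is made). Let $\mathrm I_d$ be the identity and $\mathcal N(x,v,Q)=(2\pi)^{-d/2}\det(Q)^{-1/2}\exp(-\frac12(x-v)^\top Q^{-1}(x-v))$ for symmetric positive definite $Q$. Let $\sigma_1,\ldots,\sigma_T,\bar\alpha_1,\ldots,\bar\alpha_T\in(0,1)$ satisfy $\sigma_t^2\le1-\bar\alpha_{t-1}$ for all $t\in\{2,\ldots,T\}$. For every $\theta\in\mathbb{R}^{\mathfrak d}$ let $V^\theta\colon\mathbb{R}^d\times\{1,\ldots,T\}\to\mathbb{R}^d$ be a function and let $f^\theta\colon\mathbb{R}^d\times\{1,\ldots,T\}\to\mathbb{R}^d$ satisfy $f^\theta(x,t)=(\sqrt{\bar\alpha_t})^{-1}\big(x-\sqrt{1-\bar\alpha_t}\,V^\theta(x,t)\big)$. Assume for all $\theta\in\mathbb{R}^{\mathfrak d}$, $t\in\{2,\ldots,T\}$, $x_0,\ldots,x_T\in\mathbb{R}^d$: $p^\emptyset_{1,\ldots,T\mid 0}(x_1,\ldots,x_T\mid x_0)=p^\emptyset_{T\mid 0}(x_T\mid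 x_0)\prod_{s=2}^T p^\emptyset_{s-1\mid s,0}(x_{s-1}\mid x_s,x_0)$; $p^\emptyset_{T\mid 0}(x_T\mid x_0)=\mathcal N(x_T,\sqrt{\bar\alpha_T}x_0,(1-\bar\alpha_T)\mathrm I_d)$; $p^\emptyset_{t-1\mid t,0}(x_{t-1}\mid x_t,x_0)=\mathcal N\Big(x_{t-1},\sqrt{\bar\alpha_{t-1}}x_0+\sqrt{1-\bar\alpha_{t-1}-\sigma_t^2}\,\frac{x_t-\sqrt{\bar\alpha_t}x_0}{\sqrt{1-\bar\alpha_t}},\sigma_t^2\mathrm I_d\Big)$; $p^\theta(x_0,\ldots,x_T)=p^\theta_T(x_T)\prod_{s=1}^T p^\theta_{s-1\mid s}(x_{s-1}\mid x_s)$; $p^\theta_{t-1\mid t}(x_{t-1}\mid x_t)=p^\emptyset_{t-1\mid t,0}(x_{t-1}\mid x_t,f^\theta(x_t,t))$; and $p^\theta_{0\mid 1}(x_0\mid x_1)=\mathcal N(x_0,f^\theta(x_1,1),\sigma_1^2\mathrm I_d)$. *)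

From HB Require Import structures.
From mathcomp Require Import all_boot all_order all_algebra.
From mathcomp Require Import all_classical all_reals all_analysis.
Set Implicit Arguments. Unset Strict Implicit. Unset Printing Implicit Defensive.
Import Order.TTheory GRing.Theory Num.Theory.
Import numFieldNormedType.Exports.
Local Open Scope classical_set_scope.
Local Open Scope ring_scope.

Section Defs.
Variable R : realType.

Definition borel (X : topologicalType) : set (set X) := <<s open >>.

Definition borel_fun (X : topologicalType) (f : X -> R) : Prop :=
  forall B : set R, measurable B -> borel (f @^-1` B).

Definition cons_rv n (a : R) (y : 'rV[R]_n) : 'rV[R]_n.+1 :=
  \row_(i < n.+1) match unlift ord0 i with Some j => y 0 j | None => a end.

(* Lebesgue integral over R^n (iterated one-dimensional Lebesgue integrals;
   for nonnegative measurable integrands this is the Lebesgue integral on R^n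
   by Tonelli). *)
Fixpoint intRV (n : nat) : ('rV[R]_n -> \bar R) -> \bar R :=
  match n as n0 return ('rV[R]_n0 -> \bar R) -> \bar R with
  | 0 => fun f => f 0
  | n'.+1 => fun f =>
      (\int[@lebesgue_measure R]_a intRV (fun y => f (cons_rv a y)))%E
  end.

Definition set_row m d (i : 'I_m) (v : 'rV[R]_d) (x : 'M[R]_(m, d)) :
  'M[R]_(m, d) := \matrix_(k, j) if k == i then v 0 j else x k j.

Fixpoint int_rows m d (s : seq 'I_m) (g : 'M[R]_(m, d) -> \bar R)
    (x : 'M[R]_(m, d)) : \bar R :=
  match s with
  | [::] => g x
  | i :: s' => intRV (fun v => int_rows s' g (set_row i v x))
  end.

(* A point (x_0, ..., x_T) of (R^d)^(T+1) is a matrix x : 'M_(T+1, d) whose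
   row t is x_t.  The marginal density p_{a_1..a_S} (A = {a_1,..,a_S}) is
   obtained by integrating p over the remaining variables; it is represented
   as a function of the full matrix x that only depends on the rows in A. *)
Definition marg m d (p : 'M[R]_(m, d) -> R) (A : {set 'I_m})
    (x : 'M[R]_(m, d)) : \bar R :=
  int_rows (enum (~: A)) (fun y => (p y)%:E) x.

Definition cond m d (p : 'M[R]_(m, d) -> R) (A B : {set 'I_m})
    (x : 'M[R]_(m, d)) : R :=
  fine (marg p (A :|: B) x) / fine (marg p B x).

Definition gauss d (x v : 'rV[R]_d) (Q : 'M[R]_d) : R :=
  (Num.sqrt ((2 * pi) ^+ d * \det Q))^-1 *
  expR (- (1 / 2) * ((x - v) *m invmx Q *m (x - v)^T) 0 0).

Definition is_joint_density (dO : measure_display) (O : measurableType dO)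
    (P : probability O R) m d (X : 'I_m -> O -> 'rV[R]_d)
    (p : 'M[R]_(m, d) -> R) : Prop :=
  forall B : 'I_m -> set 'rV[R]_d, (forall t, borel (B t)) ->
    P [set w | forall t, B t (X t w)] =
    int_rows (enum 'I_m)
      (fun y => (p y * \1_[set z : 'M[R]_(m, d) | forall t, B t (row t z)] y)%:E)
      0.

End Defs.

From HB Require Import structures.
From mathcomp Require Import all_boot all_order all_algebra.
From mathcomp Require Import all_classical all_reals all_analysis.
From mathcomp Require Import normal_distribution.
From mathcomp Require Import ring zify.
Import Order.TTheory GRing.Theory Num.Theory.
Import numFieldNormedType.Exports.
Local Open Scope classical_set_scope.
Local Open Scope ring_scope.
Set Implicit Arguments. Unset Strict Implicit.

(* The reverse kernels p(x_{s-1} | x_s, x_0) are Gaussians whose mean is affine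
   in x_s, so integrating x_s out against a Gaussian density in x_s is a
   Gaussian convolution and leaves a Gaussian density in x_{s-1}.  The
   hypotheses factor the joint density as
     p = p_0(x_0) N(x_T; sqrt(abar_T) x_0, 1 - abar_T) prod_{s=2}^T p(x_{s-1} | x_s, x_0).
   Integrating out x_T, ..., x_{t+1} (innermost first), each convolution maps
   N(sqrt(abar_s) x_0, 1 - abar_s) to N(sqrt(abar_{s-1}) x_0, 1 - abar_{s-1}):
   the coefficient of x_s in the kernel mean is chosen exactly for this.  What
   is left, integrated over x_{t-1}, ..., x_1, is a product of probability
   kernels of total mass one, so p_{t,0} = p_0(x_0) N(x_t; sqrt(abar_t) x_0, 1 - abar_t);
   dividing by p_0(x_0) > 0 gives the claim. *)

Section Gauss1.
Variable R : realType.

Definition gauss1 (m q x : R) : R :=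
  (Num.sqrt (q * pi *+ 2))^-1 * expR (- (x - m) ^+ 2 / (q *+ 2)).

Lemma gauss1E (m q x : R) : 0 < q -> gauss1 m q x = normal_pdf m (Num.sqrt q) x.
Proof.
move=> q_gt0; rewrite /normal_pdf sqrtr_eq0 leNgt q_gt0 /normal_peak /normal_fun.
by rewrite sqr_sqrtr ?ltW.
Qed.

Lemma gauss1_gt0 (m q x : R) : 0 < q -> 0 < gauss1 m q x.
Proof.
move=> q_gt0; rewrite mulr_gt0 ?expR_gt0 // invr_gt0 sqrtr_gt0.
by rewrite mulrn_wgt0 // mulr_gt0 ?pi_gt0.
Qed.

(* Completing the square in [w]; the second factor is the law of [w] given [u]. *)
Lemma gauss1_mul (q r a al m u w : R) : 0 < q -> 0 < r ->
  gauss1 m q w * gauss1 (al + a * w) r u =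
  gauss1 (al + a * m) (r + a ^+ 2 * q) u *
  gauss1 ((r + a ^+ 2 * q)^-1 * (r * m + a * q * (u - al)))
         (q * r / (r + a ^+ 2 * q)) w.
Proof.
move=> q_gt0 r_gt0.
have D_gt0 : 0 < r + a ^+ 2 * q by rewrite ltr_wpDr // mulr_ge0 ?sqr_ge0 ?ltW.
have pi_gt0 := pi_gt0 R.
rewrite /gauss1 mulrACA [RHS]mulrACA -!expRD -!invfM.
do 2 (rewrite -sqrtrM; last by rewrite mulrn_wge0 // mulr_ge0 // ltW).
congr ((Num.sqrt _)^-1 * expR _); field; rewrite ?gt_eqF //.
Qed.

End Gauss1.

Section GaussScalar.
Variable R : realType.
Implicit Types (q r a c : R).

Lemma sqrtrX (x : R) n : 0 <= x -> Num.sqrt (x ^+ n) = Num.sqrt x ^+ n.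
Proof.
by move=> x_ge0; elim: n => [|n IH]; rewrite ?sqrtr1 // !exprS sqrtrM // IH.
Qed.

Lemma gauss_scalarE n (u v : 'rV[R]_n) q : 0 < q ->
  gauss u v q%:M = \prod_(j < n) gauss1 (v 0 j) q (u 0 j).
Proof.
move=> q_gt0.
rewrite /gauss det_scalar invmx_scalar mul_mx_scalar -scalemxAl mxE.
rewrite (_ : (2 * pi) ^+ n * q ^+ n = (q * pi *+ 2) ^+ n); last first.
  by rewrite -exprMn -mulr_natl; congr (_ ^+ _); ring.
rewrite sqrtrX; last by rewrite mulrn_wge0 // mulr_ge0 ?ltW ?pi_gt0.
rewrite /gauss1 big_split /= prodr_const card_ord exprVn -expR_sum.
congr (_ * expR _); rewrite !mxE !mulr_sumr; apply: eq_bigr => j _.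
by rewrite !mxE; field; rewrite gt_eqF.
Qed.

Lemma gauss_scalar_gt0 n (u v : 'rV[R]_n) q : 0 < q -> 0 < gauss u v q%:M.
Proof.
by move=> q_gt0; rewrite gauss_scalarE //; apply: prodr_gt0 => j _; exact: gauss1_gt0.
Qed.

Lemma gauss_scalar_mul n q r a (al m u w : 'rV[R]_n) : 0 < q -> 0 < r ->
  gauss w m q%:M * gauss u (al + a *: w) r%:M =
  gauss u (al + a *: m) (r + a ^+ 2 * q)%:M *
  gauss w ((r + a ^+ 2 * q)^-1 *: (r *: m + (a * q) *: (u - al)))
          (q * r / (r + a ^+ 2 * q))%:M.
Proof.
move=> q_gt0 r_gt0.
have D_gt0 : 0 < r + a ^+ 2 * q by rewrite ltr_wpDr // mulr_ge0 ?sqr_ge0 ?ltW.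
have q'_gt0 : 0 < q * r / (r + a ^+ 2 * q) by rewrite divr_gt0 // mulr_gt0.
rewrite !gauss_scalarE // -!big_split /=.
by apply: eq_bigr => j _; rewrite !mxE gauss1_mul.
Qed.

Lemma intRV_prod_gauss1 n (m : 'I_n -> R) q c : 0 < q ->
  intRV (fun w : 'rV[R]_n => (c * \prod_j gauss1 (m j) q (w 0 j))%:E) = c%:E.
Proof.
move=> q_gt0; elim: n m c => [|n IH] m c /=; first by rewrite big_ord0 mulr1.
have inner a : intRV (fun y : 'rV_n =>
    (c * \prod_j gauss1 (m j) q ((cons_rv a y) 0 j))%:E) = (c * gauss1 (m ord0) q a)%:E.
  rewrite -(IH (fun j => m (lift ord0 j))); congr intRV; apply/funext => y.
  rewrite big_ord_recl /cons_rv mxE unlift_none mulrA.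
  by rewrite (eq_bigr (fun j => gauss1 (m (lift ord0 j)) q (y 0 j))) // => j _; rewrite mxE liftK.
under eq_integral do rewrite inner EFinM gauss1E //.
by rewrite integralZl ?integral_normal_pdf ?mule1 //; exact: integrable_normal_pdf.
Qed.

Lemma intRV_gauss n c (m : 'rV[R]_n) q : 0 < q ->
  intRV (fun w : 'rV[R]_n => (c * gauss w m q%:M)%:E) = c%:E.
Proof.
move=> q_gt0; rewrite -(intRV_prod_gauss1 (fun j => m 0 j) c q_gt0).
by congr intRV; apply/funext => w; rewrite gauss_scalarE.
Qed.

Lemma intRV_gauss_mul n c q r a (al m u : 'rV[R]_n) : 0 < q -> 0 < r ->
  intRV (fun w : 'rV[R]_n => (c * (gauss w m q%:M * gauss u (al + a *: w) r%:M))%:E) =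
  (c * gauss u (al + a *: m) (r + a ^+ 2 * q)%:M)%:E.
Proof.
move=> q_gt0 r_gt0.
have q'_gt0 : 0 < q * r / (r + a ^+ 2 * q).
  by rewrite divr_gt0 ?mulr_gt0 // ltr_wpDr // mulr_ge0 ?sqr_ge0 ?ltW.
under eq_fun do rewrite gauss_scalar_mul // mulrA.
exact: intRV_gauss.
Qed.
End GaussScalar.

Section Rows.
Variables (R : realType) (m d : nat).
Local Notation M := 'M[R]_(m, d).
Implicit Types (i k : 'I_m) (v w : 'rV[R]_d) (x : M) (s : seq 'I_m).

Lemma row_set_row i v x : row i (set_row i v x) = v.
Proof. by apply/rowP => l; rewrite !mxE eqxx. Qed.

Lemma row_set_row_neq i k v x : k != i -> row k (set_row i v x) = row k x.
Proof. by move=> ki; apply/rowP => l; rewrite !mxE (negPf ki). Qed.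

Lemma set_row_set_row i v w x : set_row i w (set_row i v x) = set_row i w x.
Proof. by apply/matrixP => k l; rewrite !mxE; case: eqP. Qed.

Lemma set_rowC i k v w x : i != k ->
  set_row i v (set_row k w x) = set_row k w (set_row i v x).
Proof.
move=> ik; apply/matrixP => l l'; rewrite !mxE.
by case: (eqVneq l i) => [->|//]; rewrite (negPf ik).
Qed.

Lemma int_rows_cat s1 s2 (g : M -> \bar R) x :
  int_rows (s1 ++ s2) g x = int_rows s1 (int_rows s2 g) x.
Proof. by elim: s1 x => [|i s IH] x //=; congr intRV; apply/funext => v. Qed.

Lemma int_rows_rcons s i (g : M -> \bar R) x :
  int_rows (rcons s i) g x = int_rows s (fun y => intRV (fun v => g (set_row i v y))) x.
Proof. by rewrite -cats1 int_rows_cat. Qed.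

Lemma eq_int_rows s (g g' : M -> \bar R) x : g =1 g' -> int_rows s g x = int_rows s g' x.
Proof. by move/funext->. Qed.

Definition indep_row (A : Type) i (f : M -> A) := forall v y, f (set_row i v y) = f y.

Lemma indep_row_int_rows s i (g : M -> \bar R) : i \in s -> indep_row i (int_rows s g).
Proof.
elim: s => [|k s IH] //; rewrite in_cons => /predU1P [->|i_s] v y /=.
  by congr intRV; apply/funext => w; rewrite set_row_set_row.
congr intRV; apply/funext => w.
have [->|ik] := eqVneq i k; first by rewrite set_row_set_row.
by rewrite -set_rowC // IH.
Qed.

Lemma indep_row_marg (p : M -> R) (A : {set 'I_m}) i : i \notin A -> indep_row i (marg p A).
Proof. by move=> iA; apply: indep_row_int_rows; rewrite mem_enum inE. Qed.

End Rows.

Section GaussChain.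
Variables (R : realType) (m d : nat).
Local Notation M := 'M[R]_(m, d).
Variables (j : nat -> 'I_m) (al : nat -> M -> 'rV[R]_d) (a r : nat -> R).

Definition chain_kernel k (y : M) : R :=
  gauss (row (j k.-1) y) (al k y + a k *: row (j k) y) (r k)%:M.

(* [chain_step k (mu, V)] is the (mean, variance) of row [j k.-1] once row [j k],
   distributed as N(mu, V), is integrated out against [chain_kernel k]. *)
Definition chain_step k (mV : (M -> 'rV[R]_d) * R) : (M -> 'rV[R]_d) * R :=
  (fun y => al k y + a k *: mV.1 y, r k + a k ^+ 2 * mV.2).

Lemma indep_row_foldr_chain_step i s mV :
  indep_row i mV.1 -> (forall k, indep_row i (al k)) ->
  indep_row i (foldr chain_step mV s).1.
Proof. by move=> mu_i al_i; elim: s => [|k s IH] //= v y; rewrite al_i IH. Qed.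

Lemma foldr_chain_step_gt0 s mV :
  0 < mV.2 -> (forall k, k \in s -> 0 < r k) -> 0 < (foldr chain_step mV s).2.
Proof.
move=> V_gt0; elim: s => [|k s IH] //= r_gt0.
have s_gt0 : 0 < (foldr chain_step mV s).2.
  by apply: IH => k' k's; rewrite r_gt0 // in_cons k's orbT.
exact: ltr_wpDr (mulr_ge0 (sqr_ge0 _) (ltW s_gt0)) (r_gt0 _ (mem_head _ _)).
Qed.

Lemma chain_kernel_set_row k i v y : j k.-1 != i -> j k != i -> indep_row i (al k) ->
  chain_kernel k (set_row i v y) = chain_kernel k y.
Proof. by move=> ki1 ki al_i; rewrite /chain_kernel al_i !row_set_row_neq. Qed.

Lemma int_rows_gauss_chain b l c mV x :
  (forall k k', (b <= k <= b + l)%N -> (b <= k' <= b + l)%N -> j k = j k' -> k = k') ->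
  (forall k, (b < k <= b + l)%N -> 0 < r k) -> 0 < mV.2 ->
  (forall i, (b < i <= b + l)%N ->
    [/\ indep_row (j i) c, indep_row (j i) mV.1 & forall k, indep_row (j i) (al k)]) ->
  int_rows [seq j i | i <- iota b.+1 l]
    (fun y => (c y * (gauss (row (j (b + l)%N) y) (mV.1 y) mV.2%:M *
                      \prod_(b.+1 <= k < (b + l)%N.+1) chain_kernel k y))%:E) x =
  (c x * gauss (row (j b) x) ((foldr chain_step mV (iota b.+1 l)).1 x)
                 (foldr chain_step mV (iota b.+1 l)).2%:M)%:E.
Proof.
elim: l c mV => [|l IH] c mV j_inj r_gt0 V_gt0 indep.
  by rewrite /= addn0 big_geq // mulr1.
have -> : iota b.+1 l.+1 = rcons (iota b.+1 l) (b + l)%N.+1.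
  by rewrite -[l.+1]addn1 iotaD cats1 addSn.
rewrite map_rcons int_rows_rcons foldr_rcons addnS.
set n := (b + l)%N.
have [c_n mu_n al_n] := indep n.+1 ltac:(lia).
have j_neq k : (b <= k <= n)%N -> j k != j n.+1 by move=> kb; apply/eqP => /j_inj; lia.
rewrite (@eq_int_rows _ _ _ _ _ (fun y => (c y *
   (gauss (row (j n) y) ((chain_step n.+1 mV).1 y) (chain_step n.+1 mV).2%:M *
    \prod_(b.+1 <= k < n.+1) chain_kernel k y))%:E)).
  apply: (IH c (chain_step n.+1 mV)) => [k k' kb k'b|k kb||i ib].
  - by apply: j_inj; lia.
  - by apply: r_gt0; lia.
  - apply: ltr_wpDr; first by rewrite mulr_ge0 ?sqr_ge0 ?ltW.
    by apply: r_gt0; lia.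
  - have [c_i mu_i al_i] := indep i ltac:(lia).
    by split=> // v y; rewrite /= al_i mu_i.
move=> y /=; rewrite [in RHS]mulrCA [in RHS]mulrC -intRV_gauss_mul ?r_gt0 //; last by lia.
congr intRV; apply/funext => v; apply: congr1.
have top : chain_kernel n.+1 (set_row (j n.+1) v y) =
    gauss (row (j n) y) (al n.+1 y + a n.+1 *: v) (r n.+1)%:M.
  by rewrite /chain_kernel al_n row_set_row row_set_row_neq ?j_neq //; lia.
rewrite c_n mu_n row_set_row big_nat_recr ?top /=; last by lia.
have prod_eq : \prod_(b.+1 <= k < n.+1) chain_kernel k (set_row (j n.+1) v y) =
    \prod_(b.+1 <= k < n.+1) chain_kernel k y.
  apply: eq_big_nat => k kb.
  by apply: chain_kernel_set_row; [apply: j_neq | apply: j_neq | exact: al_n]; lia.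
rewrite [in LHS]prod_eq; ring.
Qed.

Lemma int_rows_gauss_chain_mass b l c mV x :
  (forall k k', (b <= k <= b + l)%N -> (b <= k' <= b + l)%N -> j k = j k' -> k = k') ->
  (forall k, (b < k <= b + l)%N -> 0 < r k) -> 0 < mV.2 ->
  (forall i, (b <= i <= b + l)%N ->
    [/\ indep_row (j i) c, indep_row (j i) mV.1 & forall k, indep_row (j i) (al k)]) ->
  int_rows [seq j i | i <- iota b l.+1]
    (fun y => (c y * (gauss (row (j (b + l)%N) y) (mV.1 y) mV.2%:M *
                      \prod_(b.+1 <= k < (b + l)%N.+1) chain_kernel k y))%:E) x =
  (c x)%:E.
Proof.
move=> j_inj r_gt0 V_gt0 indep.
have [c_b mu_b al_b] := indep b ltac:(lia).
have chain v := @int_rows_gauss_chain b l c mV (set_row (j b) v x) j_inj r_gt0 V_gt0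
  (fun i ib => indep i ltac:(lia)).
rewrite /=; under eq_fun => v do
  rewrite chain c_b row_set_row (indep_row_foldr_chain_step _ mu_b al_b).
apply: intRV_gauss; apply: foldr_chain_step_gt0 => // k.
by rewrite mem_iota => kb; apply: r_gt0; lia.
Qed.
End GaussChain.

Lemma inord0 T : inord 0 = ord0 :> 'I_T.+1.
Proof. by apply: val_inj; rewrite /= inordK. Qed.

Lemma inord_eq T i k : (i <= T)%N -> (k <= T)%N ->
  (inord i == inord k :> 'I_T.+1) = (i == k).
Proof.
move=> iT kT; apply/eqP/eqP => [/(congr1 val)|->] //.
by rewrite /= !inordK.
Qed.

Lemma ord0_neq_inord T i : (0 < i <= T)%N -> ord0 != inord i :> 'I_T.+1.
Proof. by move=> i_range; rewrite -inord0 inord_eq //; lia. Qed.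

Lemma iota_split_at n k : (0 < k <= n)%N ->
  iota 0 n.+1 = 0%N :: iota 1 k.-1 ++ k :: iota k.+1 (n - k).
Proof.
move=> k_range; rewrite -[n.+1](_ : 1 + (k.-1 + (1 + (n - k))) = n.+1)%N; last by lia.
by rewrite !iotaD /= add0n add1n prednK ?addn1 //; lia.
Qed.

Lemma enum_setC_pair T (t : 'I_T.+1) : (0 < t)%N ->
  enum (~: ([set t] :|: [set ord0])) =
  [seq inord i | i <- iota 1 t.-1 ++ iota t.+1 (T - t)].
Proof.
move=> t_gt0; have tT : (t <= T)%N by rewrite -ltnS.
have enum_ord : enum 'I_T.+1 = [seq inord i | i <- iota 0 T.+1].
  rewrite -val_enum_ord -map_comp (eq_map (g := id)) ?map_id // => i /=.
  by rewrite inord_val.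
rewrite /enum_mem -enumT enum_ord filter_map; congr map.
rewrite (eq_in_filter (a2 := fun k => (k != 0%N) && (k != t))); last first.
  move=> k; rewrite mem_iota ltnS => kT; rewrite !inE negb_or andbC.
  by rewrite -{1}(inord_val t) -inord0 !inord_eq.
rewrite (@iota_split_at T t) ?t_gt0 // /= filter_cat /= eqxx andbF.
by congr (_ ++ _); apply/all_filterP/allP => k; rewrite mem_iota => k_range;
  apply/andP; split; apply/eqP; lia.
Qed.

Lemma foldr_iota_telescope (A : Type) (f : nat -> A -> A) (g : nat -> A) b l :
  (forall k, (b < k <= b + l)%N -> f k (g k) = g k.-1) ->
  foldr f (g (b + l)%N) (iota b.+1 l) = g b.
Proof.
elim: l => [|l IH] fg; first by rewrite addn0.
rewrite -[l.+1]addn1 iotaD cats1 foldr_rcons addn1 addSn -addnS fg; last by lia.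
rewrite addnS /=; apply: IH => k k_range; apply: fg; lia.
Qed.

Section DDIM.
Variables (R : realType) (d T : nat) (sigma abar : nat -> R).
Hypothesis abar_lt1 : forall t, (0 < t <= T)%N -> abar t < 1.
Hypothesis sigma_gt0 : forall t, (1 < t <= T)%N -> 0 < sigma t.
Hypothesis sigma_le : forall t, (1 < t <= T)%N -> sigma t ^+ 2 <= 1 - abar t.-1.
Local Notation M := 'M[R]_(T.+1, d).

Definition kappa s := Num.sqrt (1 - abar s.-1 - sigma s ^+ 2) / Num.sqrt (1 - abar s).

Definition drift s (y : M) : 'rV[R]_d :=
  (Num.sqrt (abar s.-1) - kappa s * Num.sqrt (abar s)) *: row ord0 y.

Local Notation rev_step := (chain_step drift kappa (fun s => sigma s ^+ 2)).

Definition rev_kernel := chain_kernel (@inord T) drift kappa (fun s => sigma s ^+ 2).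

Definition fwd_params k : (M -> 'rV[R]_d) * R :=
  (fun y => Num.sqrt (abar k) *: row ord0 y, 1 - abar k).

Definition fwd_marginal k (y : M) :=
  gauss (row (inord k) y) ((fwd_params k).1 y) (fwd_params k).2%:M.

Lemma kappa_sqr s : (1 < s <= T)%N ->
  sigma s ^+ 2 + kappa s ^+ 2 * (1 - abar s) = 1 - abar s.-1.
Proof.
move=> s_range; have abar_s : abar s < 1 by apply: abar_lt1; lia.
rewrite /kappa expr_div_n !sqr_sqrtr ?subr_ge0 ?sigma_le ?ltW //.
by field; rewrite subr_eq0 eq_sym lt_eqF.
Qed.

Lemma rev_step_fwd_params s : (1 < s <= T)%N -> rev_step s (fwd_params s) = fwd_params s.-1.
Proof.
move=> s_range; apply: (congr2 pair); last exact: kappa_sqr.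
by apply/funext => y; apply/rowP => k; rewrite !mxE; ring.
Qed.

Lemma indep_row_row0 i : (0 < i <= T)%N -> indep_row (inord i) (row ord0 : M -> 'rV[R]_d).
Proof. by move=> i_range v y; rewrite row_set_row_neq // ord0_neq_inord. Qed.

Lemma indep_row_drift s i : (0 < i <= T)%N -> indep_row (inord i) (drift s).
Proof. by move=> i_range v y; rewrite /drift indep_row_row0. Qed.

Lemma indep_row_fwd_params k i : (0 < i <= T)%N -> indep_row (inord i) (fwd_params k).1.
Proof. by move=> i_range v y; rewrite /= indep_row_row0. Qed.

Lemma indep_row_rev_kernel s i : (s <= T)%N -> (0 < i <= T)%N -> i != s -> i != s.-1 ->
  indep_row (inord i) (rev_kernel s).
Proof.
move=> sT i_range i_s i_s1 v y; apply: chain_kernel_set_row; last exact: indep_row_drift.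
  by rewrite inord_eq 1?eq_sym //; lia.
by rewrite inord_eq 1?eq_sym //; lia.
Qed.

Lemma indep_row_fwd_marginal k i : (k <= T)%N -> (0 < i <= T)%N -> i != k ->
  indep_row (inord i) (fwd_marginal k).
Proof.
move=> kT i_range ik v y.
rewrite /fwd_marginal indep_row_fwd_params ?row_set_row_neq //.
by rewrite inord_eq 1?eq_sym //; lia.
Qed.

Lemma int_rows_above (c : M -> R) t x : (0 < t <= T)%N ->
  (forall i, (t < i <= T)%N -> indep_row (inord i) c) ->
  int_rows [seq inord i | i <- iota t.+1 (T - t)]
    (fun y => (c y * (fwd_marginal T y * \prod_(t.+1 <= s < T.+1) rev_kernel s y))%:E) x =
  (c x * fwd_marginal t x)%:E.
Proof.
move=> t_range c_ind; have tT : (t <= T)%N by lia.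
have telescope : foldr rev_step (fwd_params T) (iota t.+1 (T - t)) = fwd_params t.
  have := @foldr_iota_telescope _ rev_step fwd_params t (T - t).
  by rewrite subnKC //; apply=> k k_range; apply: rev_step_fwd_params; lia.
have := @int_rows_gauss_chain _ _ _ (@inord T) drift kappa (fun s => sigma s ^+ 2)
  t (T - t) c (fwd_params T) x.
rewrite subnKC // telescope; apply=> [k k' k_range k'_range /eqP|k k_range||i i_range].
- by rewrite inord_eq => [/eqP||]; lia.
- by rewrite exprn_gt0 ?sigma_gt0 //; lia.
- by rewrite subr_gt0 abar_lt1 //; lia.
- split; [apply: c_ind | apply: indep_row_fwd_params | move=> k; apply: indep_row_drift];
  lia.
Qed.

Lemma int_rows_below (c : M -> R) t x : (0 < t <= T)%N ->
  (forall i, (0 < i < t)%N -> indep_row (inord i) c) ->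
  int_rows [seq inord i | i <- iota 1 t.-1]
    (fun y => (c y * \prod_(2 <= s < t.+1) rev_kernel s y)%:E) x = (c x)%:E.
Proof.
move=> t_range c_ind; have [t_gt1|t_le1] := ltnP 1 t; last first.
  have -> : t = 1%N by lia.
  by rewrite /= big_geq ?mulr1.
have := @int_rows_gauss_chain_mass _ _ _ (@inord T) drift kappa (fun s => sigma s ^+ 2)
  1 (t - 2) c (fun y => drift t y + kappa t *: row (inord t) y, sigma t ^+ 2) x.
have -> : (t - 2).+1 = t.-1 by lia.
have -> : (1 + (t - 2))%N = t.-1 by lia.
rewrite prednK; last by lia.
move=> <- => [|k k' k_range k'_range /eqP|k k_range||i i_range].
- apply: eq_int_rows => y; rewrite big_nat_recr /=; last by lia.
  by rewrite [_ * rev_kernel t y]mulrC.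
- by rewrite inord_eq => [/eqP||]; lia.
- by rewrite exprn_gt0 ?sigma_gt0 //; lia.
- by rewrite exprn_gt0 ?sigma_gt0 //; lia.
- have i_range' : (0 < i <= T)%N by lia.
  split=> [|v y|k]; [apply: c_ind; lia | | exact: indep_row_drift].
  by rewrite /= indep_row_drift // row_set_row_neq // inord_eq 1?eq_sym //; lia.
Qed.

Lemma marg_pair_fwd_marginal (p c : M -> R) (t : 'I_T.+1) x : (0 < t)%N ->
  (forall i, (0 < i <= T)%N -> indep_row (inord i) c) ->
  (forall y, p y = c y * (fwd_marginal T y * \prod_(2 <= s < T.+1) rev_kernel s y)) ->
  marg p ([set t] :|: [set ord0]) x = (c x * fwd_marginal t x)%:E.
Proof.
move=> t_gt0 c_ind p_factor; have t_range : (0 < t <= T)%N by rewrite t_gt0 -ltnS ltn_ord.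
have lower_ind i : (0 < i < t)%N -> indep_row (inord i) (fun y => c y * fwd_marginal t y).
  move=> i_range v y /=.
  by rewrite c_ind ?indep_row_fwd_marginal //; lia.
have upper_ind i : (t < i <= T)%N ->
    indep_row (inord i) (fun y => c y * \prod_(2 <= s < t.+1) rev_kernel s y).
  move=> i_range v y /=; rewrite c_ind; last by lia.
  apply: congr1; apply: eq_big_nat => s s_range.
  by apply: indep_row_rev_kernel; lia.
rewrite /marg enum_setC_pair // map_cat int_rows_cat.
rewrite -(int_rows_below x t_range lower_ind).
apply: eq_int_rows => y /=; rewrite mulrAC.
rewrite -(int_rows_above y t_range upper_ind).
apply: eq_int_rows => z.
rewrite p_factor (@big_cat_nat _ _ _ t.+1 2 T.+1) /=; [|lia..].
by apply: congr1; rewrite [fwd_marginal T z * _]mulrCA -[in RHS]mulrA.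
Qed.

Lemma rev_kernelE (t : 'I_T.+1) (y : M) :
  gauss (row (inord t.-1) y)
    (Num.sqrt (abar t.-1) *: row ord0 y +
     kappa t *: (row t y - Num.sqrt (abar t) *: row ord0 y))
    (sigma t ^+ 2)%:M = rev_kernel t y.
Proof.
rewrite /rev_kernel /chain_kernel inord_val; set x0 := row ord0 y.
suff -> : Num.sqrt (abar t.-1) *: x0 + kappa t *: (row t y - Num.sqrt (abar t) *: x0) =
    drift t y + kappa t *: row t y by [].
by apply/rowP => k; rewrite !mxE; ring.
Qed.

Section JointDensity.
Hypothesis T_gt0 : (0 < T)%N.
Variable p : M -> R.
Hypothesis p_gt0 : forall x, 0 < p x.
Hypothesis cond_chain : forall x : M,
  cond p (~: [set ord0]) [set ord0] x =
  cond p [set ord_max] [set ord0] x *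
  \prod_(s < T.+1 | (2 <= s)%N) cond p [set inord s.-1] [set inord s; ord0] x.
Hypothesis cond_last : forall x : M,
  cond p [set ord_max] [set ord0] x =
  gauss (row ord_max x) (Num.sqrt (abar T) *: row ord0 x) ((1 - abar T)%:M).
Hypothesis cond_back : forall (t : 'I_T.+1) (x : M), (2 <= t)%N ->
  cond p [set inord t.-1] [set t; ord0] x =
  gauss (row (inord t.-1) x)
    (Num.sqrt (abar t.-1) *: row ord0 x +
     (Num.sqrt (1 - abar t.-1 - sigma t ^+ 2) / Num.sqrt (1 - abar t)) *:
       (row t x - Num.sqrt (abar t) *: row ord0 x))
    ((sigma t ^+ 2)%:M).

Lemma joint_density_factor y :
  0 < fine (marg p [set ord0] y) /\
  p y = fine (marg p [set ord0] y) *
        (fwd_marginal T y * \prod_(2 <= s < T.+1) rev_kernel s y).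
Proof.
set m0 := fine _; set G := fwd_marginal T y * _.
have G_gt0 : 0 < G.
  rewrite mulr_gt0 ?gauss_scalar_gt0 ?subr_gt0 ?abar_lt1 ?T_gt0 ?leqnn //.
  rewrite big_nat_cond; apply: prodr_gt0 => s /andP [s_range _].
  by apply: gauss_scalar_gt0; rewrite exprn_gt0 // sigma_gt0.
have p_div : p y / m0 = G.
  have := cond_chain y; rewrite cond_last {1}/cond {1}/marg.
  rewrite finset.setUC finset.setUCr finset.setCT enum_set0 /=.
  rewrite (eq_bigr (fun s : 'I_T.+1 => rev_kernel s y)) => [->|s s2]; last first.
    by rewrite inord_val (cond_back y s2) rev_kernelE.
  have -> : (ord_max : 'I_T.+1) = inord T by apply: val_inj; rewrite /= inordK.
  by rewrite /G big_geq_mkord.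
(* [cond] divides by [m0], and [x / 0 = 0]: the factorisation forces [m0 != 0]. *)
have m0_neq0 : m0 != 0.
  by apply: contraTneq G_gt0 => m0_eq0; rewrite -p_div m0_eq0 invr0 mulr0 ltxx.
have p_eq : p y = m0 * G by rewrite -p_div mulrC divfK.
by split=> //; rewrite -(pmulr_lgt0 _ G_gt0) -p_eq.
Qed.

End JointDensity.
End DDIM.

Unset Implicit Arguments.

Theorem lemma5p6 (R : realType) (d T : nat) (hd : (0 < d)%N) (hT : (0 < T)%N)
  (dO : measure_display) (O : measurableType dO) (P : probability O R)
  (X : 'I_T.+1 -> O -> 'rV[R]_d)
  (hX : forall t (B : set 'rV[R]_d), borel B -> measurable (X t @^-1` B))
  (p : 'M[R]_(T.+1, d) -> R)
  (hp_pos : forall x, 0 < p x) (hp_meas : borel_fun p)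
  (hp_dens : is_joint_density P X p)
  (sigma abar : nat -> R)
  (hsigma : forall t, (1 <= t <= T)%N -> 0 < sigma t < 1)
  (habar : forall t, (1 <= t <= T)%N -> 0 < abar t < 1)
  (hsig_le : forall t, (2 <= t <= T)%N -> sigma t ^+ 2 <= 1 - abar t.-1)
  (hfact : forall x : 'M[R]_(T.+1, d),
     cond p (~: [set ord0]) [set ord0] x =
     cond p [set ord_max] [set ord0] x *
     \prod_(s < T.+1 | (2 <= s)%N)
        cond p [set inord s.-1] [set inord s; ord0] x)
  (hT0 : forall x : 'M[R]_(T.+1, d),
     cond p [set ord_max] [set ord0] x =
     gauss (row ord_max x) (Num.sqrt (abar T) *: row ord0 x)
           ((1 - abar T)%:M))
  (hback : forall (t : 'I_T.+1) (x : 'M[R]_(T.+1, d)), (2 <= t)%N ->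
     cond p [set inord t.-1] [set t; ord0] x =
     gauss (row (inord t.-1) x)
       (Num.sqrt (abar t.-1) *: row ord0 x +
        (Num.sqrt (1 - abar t.-1 - sigma t ^+ 2) /
           Num.sqrt (1 - abar t)) *: (row t x - Num.sqrt (abar t) *: row ord0 x))
       ((sigma t ^+ 2)%:M)) :
  forall (t : 'I_T.+1) (x : 'M[R]_(T.+1, d)), (1 <= t)%N ->
    cond p [set t] [set ord0] x =
    gauss (row t x) (Num.sqrt (abar t) *: row ord0 x) ((1 - abar t)%:M).
Proof.
move=> t x t_gt0.
have abar_lt1 k : (0 < k <= T)%N -> abar k < 1 by move/habar/andP => [].
have sigma_gt0 k : (1 < k <= T)%N -> 0 < sigma k.
  by move=> k_range; have /andP [] := hsigma k ltac:(lia).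
have factor := joint_density_factor abar_lt1 sigma_gt0 hT hp_pos hfact hT0 hback.
have m0_ind i : (0 < i <= T)%N -> indep_row (inord i) (fun y => fine (marg p [set ord0] y)).
  by move=> i_range v y; rewrite indep_row_marg // inE -inord0 inord_eq //; lia.
rewrite /cond (marg_pair_fwd_marginal abar_lt1 sigma_gt0 hsig_le x t_gt0 m0_ind
  (fun y => (factor y).2)).
by rewrite /= mulrAC divff ?mul1r ?gt_eqF ?(factor x).1 // /fwd_marginal inord_val.
Qed.
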